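(* Let $(Y,\|\cdot\|)$ be a Banach space, $(T_t)_{t\ge0}$ a strongly continuous semigroup of bounded linear operators on $Y$ with infinitesimal generator $L$ and domain $D(L)$. Let $A$ be a linear operator defined on a linear subspace $D(A)\subset Y$ with values in $Y$. Assume $\xi\colon\mathbb{R}\to D(A)$ is such that $t\mapsto\xi(t)$ is differentiable in $Y$, $t\mapsto\xi'(t)$ is continuous in $Y$, $t\mapsto A\xi(t)$ is continuous in $Y$, $t\mapsto\xi(t)$ has compact support in $\mathbb{R}$, and $$\int_s^\infty T_{u-s}\big[\xi'(u)+A\xi(u)\big]\,du=-\xi(s),\qquad s\in\mathbb{R}$$ (Riemann integral of a $Y$-valued function). Then $\xi(t)\in D(L)$ and $L\xi(t)=A\xi(t)$ for all $t\in\mathbb{R}$. *)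

From HB Require Import structures.
From mathcomp Require Import all_boot all_order all_algebra.
From mathcomp Require Import all_classical all_reals all_analysis.
Set Implicit Arguments. Unset Strict Implicit. Unset Printing Implicit Defensive.
Import Order.TTheory GRing.Theory Num.Theory.
Import numFieldNormedType.Exports.
Local Open Scope classical_set_scope.
Local Open Scope ring_scope.

Section Defs.
Variables (R : realType) (Y : normedModType R).

Definition riemann_sum (f : R -> Y) (n : nat) (x c : nat -> R) : Y :=
  \sum_(i < n) (x i.+1 - x i) *: f (c i).

Definition tagged_partition (a b : R) (n : nat) (x c : nat -> R) : Prop :=
  x 0%N = a /\ x n = b /\
  (forall i, (i < n)%N -> x i < x i.+1 /\ x i <= c i <= x i.+1).

Definition is_RInt (f : R -> Y) (a b : R) (I : Y) : Prop :=
  forall e : R, 0 < e -> exists2 d : R, 0 < d &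
    forall n x c, tagged_partition a b n x c ->
      (forall i, (i < n)%N -> x i.+1 - x i < d) ->
      `|riemann_sum f n x c - I| < e.

Definition is_RInt_inf (f : R -> Y) (a : R) (I : Y) : Prop :=
  forall e : R, 0 < e -> exists M : R, forall b, M < b ->
    exists2 J : Y, is_RInt f a b J & `|J - I| < e.

(** Strongly continuous semigroup of bounded linear operators on Y
    (T t is only meaningful for t >= 0). *)
Definition C0_semigroup (T : R -> Y -> Y) : Prop :=
  [/\ (forall t, 0 <= t -> forall (k : R) (y z : Y),
          T t (k *: y + z) = k *: T t y + T t z),
      (forall t, 0 <= t -> continuous (T t)),
      T 0 = id,
      (forall s t, 0 <= s -> 0 <= t -> T (s + t) = T s \o T t) &
      (forall y : Y, T^~ y @ 0^'+ --> y)].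

(** y is in the domain D(L) of the infinitesimal generator L of T
    and L y = z:  (T h y - y)/h --> z as h -> 0+. *)
Definition generator_at (T : R -> Y -> Y) (y z : Y) : Prop :=
  (fun h : R => h^-1 *: (T h y - y)) @ 0^'+ --> z.

Definition linear_operator_on (DA : set Y) (A : Y -> Y) : Prop :=
  DA 0 /\
  (forall (k : R) y z, DA y -> DA z -> DA (k *: y + z)) /\
  (forall (k : R) y z, DA y -> DA z -> A (k *: y + z) = k *: A y + A z).

End Defs.

(* Fix s and put g u := xi' u + A (xi u). Applying T h to the integral identity at s
   and using the semigroup law turns it into the tail from s of the identity at s - h,
   so T h (xi s) - xi (s - h) is the integral of T (u - (s - h)) (g u) over [s - h, s].
   Since T is uniformly bounded near 0 (Banach-Steinhaus) and g is continuous, this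
   integral is h g s + o(h). Writing
     (T h (xi s) - xi s) / h = (xi (s - h) - xi s) / h + (T h (xi s) - xi (s - h)) / h,
   the two quotients tend to - xi' s and g s, whose sum is A (xi s). *)

From HB Require Import structures.
From mathcomp Require Import all_boot all_order all_algebra.
From mathcomp Require Import all_classical all_reals all_analysis.
From mathcomp Require Import zify lra.
Import Order.TTheory GRing.Theory Num.Theory.
Import numFieldNormedType.Exports.
Local Open Scope classical_set_scope.
Local Open Scope ring_scope.

Set Implicit Arguments. Unset Strict Implicit. Unset Printing Implicit Defensive.

Section LinearMap.
Variables (R : ringType) (U V : lmodType R) (S : U -> V).
Hypothesis linS : linear S.

Lemma lin_map0 : S 0 = 0.
Proof.
have := linS 1 0 0; rewrite !scale1r !addr0 => S00.
by apply: (@addrI _ (S 0)); rewrite -S00 addr0.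
Qed.

Lemma lin_mapD u v : S (u + v) = S u + S v.
Proof. by have := linS 1 u v; rewrite !scale1r. Qed.

Lemma lin_mapZ (k : R) u : S (k *: u) = k *: S u.
Proof. by rewrite -[k *: u]addr0 linS lin_map0 addr0. Qed.

Lemma lin_mapN u : S (- u) = - S u.
Proof. by rewrite -scaleN1r lin_mapZ scaleN1r. Qed.

Lemma lin_mapB u v : S (u - v) = S u - S v.
Proof. by rewrite lin_mapD lin_mapN. Qed.

End LinearMap.

Lemma continuous_at_dist_lt (R : realType) (U V : normedModType R) (S : U -> V) y :
  {for y, continuous S} ->
  forall e, 0 < e -> exists2 eta, 0 < eta & forall z, `|y - z| < eta -> `|S y - S z| < e.
Proof.
move=> cS e e0.
have /nbhs_ballP[r /= r0 Hr] : nbhs y (fun z => `|S y - S z| < e).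
  exact: (cvgr_dist_lt _ _ cS).
by exists r => // z yz; apply: Hr; rewrite -ball_normE.
Qed.

Lemma at_right0_interval (R : realType) (P : R -> Prop) :
  (\forall t \near 0^'+, P t) -> exists2 eta, 0 < eta & forall t, 0 < t < eta -> P t.
Proof.
move=> /nbhs_ballP[r r0 Hr]; exists r => // t /andP[t0 tr].
by apply: Hr => //; rewrite -ball_normE /= sub0r normrN gtr0_norm.
Qed.

Section TaggedPartition.
Variable R : realType.
Implicit Types (a b d : R) (x c : nat -> R).

Lemma tagged_partition_le a b n x c : tagged_partition a b n x c ->
  forall i j, (i <= j <= n)%N -> x i <= x j.
Proof.
move=> [_ [_ Hx]] i j; elim: j => [|j IH].
  by rewrite leqn0 => /andP[/eqP -> _].
move=> /andP[]; rewrite leq_eqVlt => /orP[/eqP -> //|ij jn].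
have [/ltW xj _] := Hx j jn.
by apply: le_trans xj; apply: IH; rewrite -ltnS ij ltnW.
Qed.

Lemma tagged_partition_tag a b n x c : tagged_partition a b n x c ->
  forall i, (i < n)%N -> a <= c i <= b.
Proof.
move=> P i lin; have [x0 [xn Hx]] := P.
have [_ /andP[xc cx]] := Hx i lin.
apply/andP; split.
  by apply: le_trans xc; rewrite -x0; apply: (tagged_partition_le P); rewrite leq0n ltnW.
by apply: le_trans cx _; rewrite -xn; apply: (tagged_partition_le P); rewrite lin leqnn.
Qed.

Lemma uniform_tagged_partition a b d : a < b -> 0 < d -> exists n x c,
  tagged_partition a b n x c /\ forall i, (i < n)%N -> x i.+1 - x i < d.
Proof.
move=> ab d0; set n := (Num.Def.trunc ((b - a) / d)).+1.
have n0 : (0 < n%:R :> R) by rewrite ltr0n.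
set st := (b - a) / n%:R.
have st0 : 0 < st by rewrite divr_gt0 // subr_gt0.
have step i : a + i.+1%:R * st - (a + i%:R * st) = st by rewrite -addn1 natrD; lra.
exists n, (fun i => a + i%:R * st), (fun i => a + i%:R * st); split; last first.
  move=> i _; rewrite step /st ltr_pdivrMr // mulrC -ltr_pdivrMr //.
  exact: truncnS_gt.
split; first by rewrite mul0r addr0.
split; first by rewrite /st mulrC divfK ?gt_eqF // addrC subrK.
by move=> i _; rewrite lexx -subr_gt0 -[_ <= _]subr_ge0 step ltW.
Qed.

Definition cat_seq n1 x1 x2 : nat -> R :=
  fun i => if (i < n1)%N then x1 i else x2 (i - n1)%N.

Lemma tagged_partition_cat a m b n1 x1 c1 n2 x2 c2 :
  tagged_partition a m n1 x1 c1 -> tagged_partition m b n2 x2 c2 ->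
  tagged_partition a b (n1 + n2) (cat_seq n1 x1 x2) (cat_seq n1 c1 c2).
Proof.
move=> [a1 [m1 H1]] [m2 [b2 H2]]; split.
  by rewrite /cat_seq; case: n1 a1 m1 H1 => [|n1] a1 m1 H1 //=; rewrite subn0 m2 -m1 a1.
split; first by rewrite /cat_seq ltnNge leq_addr /= addKn.
move=> i lin; rewrite /cat_seq; case: (ltnP i n1) => in1.
  case: (ltnP i.+1 n1) => in1'; first exact: H1.
  have ei : i.+1 = n1 by lia.
  by rewrite ei subnn m2 -m1 -ei; exact: H1.
by rewrite ltnNge (leq_trans in1 (leqnSn _)) /= subSn //; apply: H2; lia.
Qed.

Lemma mesh_cat_lt n1 x1 n2 x2 d : x2 0%N = x1 n1 ->
  (forall i, (i < n1)%N -> x1 i.+1 - x1 i < d) ->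
  (forall i, (i < n2)%N -> x2 i.+1 - x2 i < d) ->
  forall i, (i < n1 + n2)%N -> cat_seq n1 x1 x2 i.+1 - cat_seq n1 x1 x2 i < d.
Proof.
move=> x21 H1 H2 i lin; rewrite /cat_seq; case: (ltnP i n1) => in1.
  case: (ltnP i.+1 n1) => in1'; first exact: H1.
  have ei : i.+1 = n1 by lia.
  by rewrite ei subnn x21 -ei; exact: H1.
by rewrite ltnNge (leq_trans in1 (leqnSn _)) /= subSn //; apply: H2; lia.
Qed.

End TaggedPartition.

Section RiemannIntegral.
Variables (R : realType) (Y : normedModType R).
Implicit Types (f g : R -> Y) (a b m : R) (x c : nat -> R).

Lemma riemann_sum_cat f n1 x1 c1 n2 x2 c2 : x2 0%N = x1 n1 ->
  riemann_sum f (n1 + n2) (cat_seq n1 x1 x2) (cat_seq n1 c1 c2) =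
  riemann_sum f n1 x1 c1 + riemann_sum f n2 x2 c2.
Proof.
move=> x21; rewrite /riemann_sum big_split_ord /=; congr (_ + _).
  apply: eq_bigr => i _; rewrite /cat_seq /= ltn_ord.
  case: ltnP => // in1.
  have -> : i.+1 = n1 by have := ltn_ord i; lia.
  by rewrite subnn x21.
apply: eq_bigr => i _; rewrite /cat_seq /=.
have -> : (n1 + i < n1)%N = false by lia.
have -> : ((n1 + i).+1 < n1)%N = false by lia.
by rewrite -addnS !addKn.
Qed.

Lemma riemann_sum_near_const f a b n x c y e : tagged_partition a b n x c ->
  (forall u, a <= u <= b -> `|f u - y| <= e) ->
  `|riemann_sum f n x c - (b - a) *: y| <= (b - a) * e.
Proof.
move=> P fy; have [x0 [xn Hx]] := P.
have -> : b - a = \sum_(i < n) (x i.+1 - x i).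
  by rewrite -(big_mkord xpredT (fun i => x i.+1 - x i)) telescope_sumr // xn x0.
rewrite scaler_suml /riemann_sum -sumrB mulr_suml.
apply: le_trans (ler_norm_sum _ _ _) _; apply: ler_sum => i _.
have [/ltW xi _] := Hx i (ltn_ord i).
rewrite -scalerBr normrZ ger0_norm ?subr_ge0 //.
by apply: ler_wpM2l; rewrite ?subr_ge0 //; apply: fy; apply: (tagged_partition_tag P).
Qed.

(* [I - J] stands for the integral over [a, m]. *)
Lemma is_RInt_sub_near_const f a m b I J y e : is_RInt f a b I -> is_RInt f m b J ->
  a < m -> m < b -> (forall u, a <= u <= m -> `|f u - y| <= e) ->
  `|I - J - (m - a) *: y| <= (m - a) * e.
Proof.
move=> HI HJ am mb fy; apply/ler_addgt0Pr => r r0.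
have r2 : 0 < r / 2 by rewrite divr_gt0.
have [d1 d10 H1] := HI _ r2; have [d2 d20 H2] := HJ _ r2.
have d0 : 0 < Num.min d1 d2 by rewrite lt_min d10.
have [n1 [x1 [c1 [P1 M1]]]] := uniform_tagged_partition am d0.
have [n2 [x2 [c2 [P2 M2]]]] := uniform_tagged_partition mb d0.
have x21 : x2 0%N = x1 n1 by case: P1 => _ [->]; case: P2 => ->.
have M := mesh_cat_lt x21 M1 M2.
set S1 := riemann_sum f n1 x1 c1; set S2 := riemann_sum f n2 x2 c2.
have SI : `|S1 + S2 - I| < r / 2.
  rewrite -riemann_sum_cat //; apply: H1 (tagged_partition_cat P1 P2) _ => i lin.
  by have := M i lin; rewrite lt_min => /andP[].
have SJ : `|S2 - J| < r / 2.
  by apply: H2 P2 _ => i lin; have := M2 i lin; rewrite lt_min => /andP[].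
have S1y := riemann_sum_near_const P1 fy.
have -> : I - J - (m - a) *: y = (S1 - (m - a) *: y) - (S1 + S2 - I) + (S2 - J).
  rewrite opprB opprD !addrA subrK.
  by rewrite -(addrAC _ (- S1)) -(addrAC _ (- S1)) addrAC subrr add0r addrAC.
apply: le_trans (ler_normD _ _) _; apply: le_trans (lerD (ler_normB _ _) (lexx _)) _.
by rewrite (splitr r) !addrA; apply: lerD; [apply: lerD|]; rewrite // ltW.
Qed.

Lemma eq_is_RInt f g a b J : (forall u, a <= u <= b -> f u = g u) ->
  is_RInt f a b J -> is_RInt g a b J.
Proof.
move=> fg HJ e e0; have [d d0 Hd] := HJ e e0; exists d => // n x c P M.
suff <- : riemann_sum f n x c = riemann_sum g n x c by exact: Hd.
by apply: eq_bigr => i _; rewrite fg //; exact: (tagged_partition_tag P).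
Qed.

Lemma is_RInt_linear (S : Y -> Y) f a b J : linear S -> continuous S ->
  is_RInt f a b J -> is_RInt (S \o f) a b (S J).
Proof.
move=> linS cS HJ e e0.
have [eta eta0 Heta] := continuous_at_dist_lt (cS J) e0.
have [d d0 Hd] := HJ eta eta0; exists d => // n x c P M.
have -> : riemann_sum (S \o f) n x c = S (riemann_sum f n x c).
  rewrite /riemann_sum (big_morph S (lin_mapD linS) (lin_map0 linS)).
  by apply: eq_bigr => i _; rewrite lin_mapZ.
by rewrite distrC; apply: Heta; rewrite distrC; exact: Hd.
Qed.

End RiemannIntegral.

Section C0Semigroup.
Variables (R : realType) (Y : completeNormedModType R) (T : R -> Y -> Y).
Hypothesis CT : C0_semigroup T.

Let pack_linear (f : Y -> Y) (lf : linear f) : {linear Y -> Y} :=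
  HB.pack f (GRing.isLinear.Build _ _ _ _ _ lf).

Lemma C0_semigroup_pointwise_bounded (t : nat -> R) :
  (forall n, 0 <= t n <= n.+1%:R^-1) -> pointwise_bounded (range (T \o t)).
Proof.
case: CT => _ _ T0 _ Tcv tn y.
have /at_right0_interval[eta eta0 Heta] : \forall h \near 0^'+, `|y - T h y| < 1.
  exact: (cvgr_dist_lt _ _ (Tcv y)).
set N := Num.Def.trunc eta^-1.
(* Once t n < eta, T (t n) y is within 1 of y; the first N terms are summed. *)
exists (`|y| + 1 + \sum_(n < N) `|T (t n) y|) => _ [n _ <-] /=.
have sum_ge0 : 0 <= \sum_(n < N) `|T (t n) y| by apply: sumr_ge0.
have [nN|Nn] := ltnP n N.
  rewrite (bigD1 (Ordinal nN)) //= addrCA; apply: ler_wpDr => //.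
  by apply: addr_ge0; [apply: addr_ge0|apply: sumr_ge0].
have [t0 t1] := andP (tn n); rewrite ler_wpDr //.
move: t0; rewrite le_eqVlt => /orP[/eqP <-|tpos]; first by rewrite T0 lerDl.
have ty1 : `|y - T (t n) y| < 1.
  apply: Heta; rewrite tpos /=; apply: le_lt_trans t1 _.
  rewrite -[eta]invrK ltf_pV2 ?posrE ?invr_gt0 ?ltr0n //.
  by apply: lt_le_trans (truncnS_gt _) _; rewrite ler_nat ltnS.
have := ler_normB y (y - T (t n) y); rewrite opprB addrC subrK => /le_trans; apply.
by rewrite lerD2l ltW.
Qed.

(* Otherwise there are t n <= 1/(n+1) and y n with |T (t n) (y n)| > (n+1) |y n|;
   strong continuity makes the family T (t n) pointwise bounded, so Banach-Steinhaus
   bounds it uniformly, a contradiction. *)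
Lemma C0_semigroup_locally_bounded : exists2 d, 0 < d & exists2 M, 0 < M &
  forall t, 0 <= t <= d -> forall y, `|T t y| <= M * `|y|.
Proof.
have [Tl Tc _ _ _] := CT.
apply: contrapT => no_bound.
have /choice[ty Hty] : forall n, exists ty : R * Y,
    0 <= ty.1 <= n.+1%:R^-1 /\ n.+1%:R * `|ty.2| < `|T ty.1 ty.2|.
  move=> n; apply: contrapT => hn; apply: no_bound.
  exists n.+1%:R^-1; first by rewrite invr_gt0 ltr0n.
  exists n.+1%:R; first by rewrite ltr0n.
  by move=> t ht y; rewrite leNgt; apply/negP => hlt; apply: hn; exists (t, y).
have /(_ 1)[M HM] : uniform_bounded (range (T \o fst \o ty)).
  apply: Banach_Steinhauss; last first.
    by apply: C0_semigroup_pointwise_bounded => n; case: (Hty n).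
  move=> _ [n _ <-]; have t0 : 0 <= (ty n).1 by case/andP: (proj1 (Hty n)).
  have lf : linear (T (ty n).1) by exact: Tl.
  split=> //; have [k k0 Hk] := linear_lipschitz (Tc _ t0 : continuous (pack_linear lf)).
  by move=> r; exists (k * r) => y yr; apply: le_trans (Hk y) _; rewrite ler_pM2l.
set n := Num.Def.trunc M; have [/andP[t0 _] Tty] := Hty n.
set t := (ty n).1 in t0 Tty; set y := (ty n).2 in Tty.
have [y0|y0] := eqVneq y 0.
  by move: Tty; rewrite y0 (lin_map0 (Tl _ t0)) !normr0 mulr0 ltxx.
have ny0 : 0 < `|y| by rewrite normr_gt0.
have := HM _ (ex_intro2 _ _ n I erefl) (`|y|^-1 *: y).
rewrite normrZ normfV normr_id mulVf ?gt_eqF // lexx => /(_ isT) /=.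
rewrite (lin_mapZ (Tl _ t0)) normrZ normfV normr_id ler_pdivrMl // => TyM.
have := lt_le_trans Tty TyM; rewrite [X in _ < X]mulrC ltr_pM2r //.
by rewrite ltNge ltW // truncnS_gt.
Qed.

Lemma C0_semigroup_cvg0_uniform y e : 0 < e -> exists2 eta, 0 < eta &
  forall v z, 0 <= v < eta -> `|z - y| < eta -> `|T v z - y| <= e.
Proof.
move=> e0; have [d d0 [M M0 HM]] := C0_semigroup_locally_bounded.
have [Tl _ T0 _ Tcv] := CT.
have e2 : 0 < e / 2 by rewrite divr_gt0.
have /at_right0_interval[eta eta0 Heta] : \forall h \near 0^'+, `|y - T h y| < e / 2.
  exact: (cvgr_dist_lt _ _ (Tcv y)).
have eM : 0 < e / 2 / M by rewrite divr_gt0.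
exists (Num.min d (Num.min eta (e / 2 / M))); first by rewrite !lt_min d0 eta0.
move=> v z /andP[v0]; rewrite !lt_min => /and3P[vd veta _] /and3P[_ _ zy].
have -> : T v z - y = T v (z - y) + (T v y - y) by rewrite (lin_mapB (Tl v v0)) addrA subrK.
apply: le_trans (ler_normD _ _) _; rewrite (splitr e); apply: lerD.
  apply: le_trans (HM v _ _) _; first by rewrite v0 ltW.
  by rewrite -ler_pdivlMl // mulrC ltW.
move: v0; rewrite le_eqVlt => /orP[/eqP <-|vpos]; first by rewrite T0 subrr normr0 ltW.
by rewrite distrC ltW // Heta // vpos.
Qed.

Lemma C0_semigroup_increment (g xi : R -> Y) s h y e : 0 < h ->
  is_RInt_inf (fun u => T (u - s) (g u)) s (- xi s) ->
  is_RInt_inf (fun u => T (u - (s - h)) (g u)) (s - h) (- xi (s - h)) ->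
  (forall u, s - h <= u <= s -> `|T (u - (s - h)) (g u) - y| <= e) ->
  `|T h (xi s) - xi (s - h) - h *: y| <= h * e.
Proof.
have [Tl Tc _ Ts _] := CT.
move=> h0 Hs Hsh gy; apply/ler_addgt0Pr => r r0.
have r2 : 0 < r / 2 by rewrite divr_gt0.
have [eta eta0 Heta] := continuous_at_dist_lt (Tc h (ltW h0) (- xi s)) r2.
have [M1 HM1] := Hs eta eta0; have [M2 HM2] := Hsh _ r2.
set b := Num.max (Num.max M1 M2) s + 1.
have [bM1 bM2 bs] : [/\ M1 < b, M2 < b & s < b].
  have : [/\ M1 <= Num.max (Num.max M1 M2) s, M2 <= Num.max (Num.max M1 M2) s
           & s <= Num.max (Num.max M1 M2) s] by rewrite !le_max !lexx !orbT.
  by rewrite /b => -[? ? ?]; split; lra.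
have [J HJ HJs] := HM1 b bM1; have [I HI HIsh] := HM2 b bM2.
have HTJ : is_RInt (fun u => T (u - (s - h)) (g u)) s b (T h J).
  apply: eq_is_RInt (is_RInt_linear (Tl h (ltW h0)) (Tc h (ltW h0)) HJ).
  move=> u /andP[su _] /=; rewrite (_ : u - (s - h) = h + (u - s)); last by lra.
  by rewrite Ts ?subr_ge0 // ltW.
have shs : s - h < s by lra.
have := is_RInt_sub_near_const HI HTJ shs bs gy.
rewrite (_ : s - (s - h) = h) => [IJ|]; last by lra.
have TJ : `|T h J + T h (xi s)| < r / 2.
  by rewrite -normrN opprD addrC -(lin_mapN (Tl h (ltW h0))) Heta // distrC.
rewrite opprK in HIsh.
have -> : T h (xi s) - xi (s - h) - h *: y =
    (I - T h J - h *: y) - (I + xi (s - h)) + (T h J + T h (xi s)).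
  rewrite opprD !addrA (addrC _ (T h J)) !addrA (addrC (T h J) I) addrK (addrAC I).
  by rewrite subrr add0r [RHS]addrC -addrA (addrC (- _)).
apply: le_trans (ler_normD _ _) _; apply: le_trans (lerD (ler_normB _ _) (lexx _)) _.
by rewrite (splitr r) !addrA; apply: lerD; [apply: lerD|]; rewrite // ltW.
Qed.

Lemma C0_semigroup_increment_quotient (g xi : R -> Y) s : {for s, continuous g} ->
  (forall s, is_RInt_inf (fun u => T (u - s) (g u)) s (- xi s)) ->
  (fun h => h^-1 *: (T h (xi s) - xi (s - h))) @ 0^'+ --> g s.
Proof.
move=> gs Hint; apply/cvgrPdist_le => e e0.
have [eta eta0 Teta] := C0_semigroup_cvg0_uniform (g s) e0.
have [eta' eta'0 geta'] := continuous_at_dist_lt gs eta0.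
near=> h.
have h0 : 0 < h by near: h; exact: nbhs_right_gt.
have /andP[heta heta'] : (h < eta) && (h < eta').
  by rewrite -lt_min; near: h; apply: nbhs_right_lt; rewrite lt_min eta0.
have near_gs u : s - h <= u <= s -> `|T (u - (s - h)) (g u) - g s| <= e.
  move=> /andP[hu us]; apply: Teta; first by apply/andP; split; lra.
  by rewrite distrC geta' // ger0_norm; lra.
rewrite -(ler_pM2l h0) -{1}(gtr0_norm h0) -normrZ scalerBr scalerA.
rewrite mulfV ?lt0r_neq0 // scale1r distrC.
exact: C0_semigroup_increment h0 (Hint s) (Hint (s - h)) near_gs.
Unshelve. all: by end_near.
Qed.

End C0Semigroup.

Lemma derivable_left_quotient (R : realType) (V : normedModType R) (f : R -> V) s :
  derivable f s 1 -> (fun h => h^-1 *: (f (s - h) - f s)) @ 0^'+ --> - derive1 f s.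
Proof.
move=> df.
have fs' : (fun h => h^-1 *: (f (h + s) - f s)) @ 0^' --> derive1 f s.
  rewrite derive1E /derive.
  suff -> : (fun h => h^-1 *: (f (h + s) - f s)) =
            (fun h => h^-1 *: ((f \o shift s) (h *: 1) - f s)) by exact: df.
  by apply/funext => h /=; rewrite /shift /= -[h *: 1]/(h * 1) mulr1.
move: (cvg_dnbhs_at_left fs'); rewrite cvg_at_leftNP oppr0 => /cvgN.
suff -> : - ((fun h => h^-1 *: (f (h + s) - f s)) \o -%R) =
          (fun h => h^-1 *: (f (s - h) - f s)) by [].
apply/funext => h; rewrite -[LHS]/(- ((- h)^-1 *: (f (- h + s) - f s))).
by rewrite invrN scaleNr opprK (addrC (- h)).
Qed.

Theorem theorem4p4 (R : realType) (Y : completeNormedModType R)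
  (T : R -> Y -> Y) (DA : set Y) (A : Y -> Y) (xi : R -> Y) :
  C0_semigroup T ->
  linear_operator_on DA A ->
  (forall t, DA (xi t)) ->
  (forall t, derivable xi t 1) ->
  continuous (derive1 xi) ->
  continuous (A \o xi) ->
  compact (closure [set t | xi t != 0]) ->
  (forall s, is_RInt_inf (fun u => T (u - s) (derive1 xi u + A (xi u))) s (- xi s)) ->
  forall t, generator_at T (xi t) (A (xi t)).
Proof.
move=> CT _ _ dxi cdxi cAxi _ Hint s.
set g := fun u => derive1 xi u + A (xi u).
have gs : {for s, continuous g} by apply: cvgD; [exact: cdxi | exact: cAxi].
rewrite /generator_at.
have -> : (fun h => h^-1 *: (T h (xi s) - xi s)) =
    (fun h => h^-1 *: (xi (s - h) - xi s) + h^-1 *: (T h (xi s) - xi (s - h))).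
  by apply/funext => h; rewrite -scalerDr [in RHS]addrC -addrA addKr.
rewrite (_ : A (xi s) = - derive1 xi s + g s); last by rewrite /g addrA addNr add0r.
exact: cvgD (derivable_left_quotient (dxi s)) (C0_semigroup_increment_quotient CT gs Hint).
Qed.
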